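(* Let $Par^{bal}(k)$ denote the subspace of the partition algebra $Par(n,k)$ spanned by the balanced set partitions. Then: (1) $Par^{bal}(k)$ is a subalgebra of $Par(n,k)$; (2) for any $n,m$, the identification of these subspaces of $Par(n,k)$ and $Par(m,k)$ via the common basis of balanced set partitions is an isomorphism of algebras; (3) the action of $Par(n,k)$ on $V^{\otimes k}$ restricts to a $T\rtimes S_n$-equivariant action of $Par^{bal}(k)$, and the resulting algebra homomorphism $Par^{bal}(k)\to\mathrm{End}_{T\rtimes S_n}(V^{\otimes k})$ is surjective for all $n$ and $k$, and is an isomorphism whenever $n\ge k$.
   Context: $V=\mathbb{C}^n$ is the defining representation of $GL_n(\mathbb{C})$ with standard basis $x_1,\dots,x_n$, restricted to $T\rtimes S_n$, where $T$ is the diagonal torus and $S_n$ the permutation matrices. The partition algebra $Par(n,k)$ has basis the set partitions $d$ of $\{1,\dots,k\}\cup\{1',\dots,k'\}$; the product $d_1d_2$ is obtained by stacking the diagrams (identifying the primed vertices of one with the unprimed vertices of the other), taking the induced set partition of the outer vertices, and multiplying by $n^{c}$ where $c$ is the number of connected components lying entirely in the middle row. $Par(n,k)$ acts $S_n$-equivariantly on $V^{\otimes k}$ by letting $d$ send $x_{j_1}\otimes\dots\otimes x_{j_k}$ to $\sum x_{i_1}\otimes\dots\otimes x_{i_k}$, summed over all $(i_1,\dots,i_k)$ such that for any two vertices in the same block of $d$ the corresponding indices (with $i_r$ attached to vertex $r$ and $j_r$ to vertex $r'$) are equal. A set partition of $\{1,\dots,k\}\cup\{1',\dots,k'\}$ is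 balanced if each block $B$ satisfies $|B\cap\{1,\dots,k\}|=|B\cap\{1',\dots,k'\}|$. *)

From HB Require Import structures.
From mathcomp Require Import all_boot all_order all_algebra all_fingroup.
Set Implicit Arguments. Unset Strict Implicit. Unset Printing Implicit Defensive.
Import GRing.Theory Num.Theory.
Local Open Scope ring_scope.

(* Vertices: [inl i] is the unprimed vertex i, [inr i] the primed i'. *)
Notation vert k := ('I_k + 'I_k)%type.

Definition setpart (k : nat) :=
  {P : {set {set vert k}} | partition P [set: vert k]}.

Definition blk k (d : setpart k) (u v : vert k) : bool :=
  pblock (val d) u == pblock (val d) v.

Definition balanced_part k (d : setpart k) : bool :=
  [forall B in val d,
     #|[set i : 'I_k | inl i \in B]| == #|[set i : 'I_k | inr i \in B]|].

(* Stacking: d1 on top of d2; the primed vertices of d1 are identified *)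
(* with the unprimed vertices of d2 (the middle row).                  *)
(* Rows: inl (inl i) = top, inl (inr i) = middle, inr i = bottom.      *)
Notation row3 k := ('I_k + 'I_k + 'I_k)%type.

Definition e_top k (v : vert k) : row3 k :=
  match v with inl i => inl (inl i) | inr i => inl (inr i) end.
Definition e_bot k (v : vert k) : row3 k :=
  match v with inl i => inl (inr i) | inr i => inr i end.
Definition e_out k (v : vert k) : row3 k :=
  match v with inl i => inl (inl i) | inr i => inr i end.
Definition is_mid k (x : row3 k) : bool :=
  match x with inl (inr _) => true | _ => false end.

Definition stack_rel k (d1 d2 : setpart k) : rel (row3 k) := fun x y =>
  [exists u, exists v, [&& e_top u == x, e_top v == y & blk d1 u v]] ||
  [exists u, exists v, [&& e_bot u == x, e_bot v == y & blk d2 u v]].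

Definition stack_conn k (d1 d2 : setpart k) := connect (stack_rel d1 d2).

Definition comp_set k (d1 d2 : setpart k) : {set {set vert k}} :=
  [set [set v | stack_conn d1 d2 (e_out u) (e_out v)] | u : vert k].

(* [comp_set d1 d2] is always a partition; [insubd d1] merely packages it
   (the default d1 is never used). *)
Definition comp k (d1 d2 : setpart k) : setpart k := insubd d1 (comp_set d1 d2).

Definition nmid k (d1 d2 : setpart k) : nat :=
  #|[set [set y | stack_conn d1 d2 (inl (inr j)) y] | j : 'I_k &
      [forall y, stack_conn d1 d2 (inl (inr j)) y ==> is_mid y]]|.

(* The partition algebra Par(n,k) over K: vectors = finitely supported *)
(* functions on the basis of set partitions, bilinear product.         *)
Definition parvec (K : nzRingType) k := {ffun setpart k -> K}.

Definition parmul (K : nzRingType) k (n : nat) (x y : parvec K k) : parvec K k :=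
  [ffun d => \sum_(d1 : setpart k) \sum_(d2 : setpart k | comp d1 d2 == d)
                x d1 * y d2 * (n%:R) ^+ nmid d1 d2].

Definition id_set k : {set {set vert k}} := [set [set inl i; inr i] | i : 'I_k].
Definition parone (K : nzRingType) k : parvec K k :=
  [ffun d => (val d == id_set k)%:R].

(* x lies in the span Par^bal(k) of the balanced set partitions *)
Definition balanced (K : nzRingType) k (x : parvec K k) : Prop :=
  forall d : setpart k, ~~ balanced_part d -> x d = 0.

(* V^{(x) k}, V = K^n: basis x_{i_1} (x) ... (x) x_{i_k}, indexed by   *)
(* i : 'I_k -> 'I_n.  Endomorphisms are matrices E i j (E x_j =        *)
(* sum_i E i j x_i).                                                   *)
Definition tidx k n := {ffun 'I_k -> 'I_n}.

Definition label k n (i j : tidx k n) (v : vert k) : 'I_n :=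
  match v with inl r => i r | inr r => j r end.

Definition diag_act (K : nzRingType) k n (d : setpart k) (i j : tidx k n) : K :=
  ([forall u, forall v, blk d u v ==> (label i j u == label i j v)])%:R.

Definition par_act (K : nzRingType) k n (x : parvec K k) (i j : tidx k n) : K :=
  \sum_(d : setpart k) x d * diag_act K d i j.

Definition tensor_pow (K : nzRingType) k n (g : 'M[K]_n) (i j : tidx k n) : K :=
  \prod_(r < k) g (i r) (j r).

(* T x| S_n inside GL_n(K): invertible diagonal times permutation matrix *)
Definition in_TSn (K : nzRingType) n (g : 'M[K]_n) : Prop :=
  exists (t : 'rV[K]_n) (s : 'S_n),
    (forall l, t 0 l != 0) /\ g = diag_mx t *m perm_mx s.

Definition equivariant (K : nzRingType) k n (E : tidx k n -> tidx k n -> K) : Prop :=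
  forall g : 'M[K]_n, in_TSn g ->
    forall i j : tidx k n,
      \sum_(l : tidx k n) E i l * tensor_pow g l j =
      \sum_(l : tidx k n) tensor_pow g i l * E l j.

(* A diagram d acts on the basis tensor labelled by (i, j) with coefficient 1
   or 0 according as d is finer than the kernel partition ker(i, j), i.e. as
   the labelling is constant on the blocks of d.  When d1 is balanced, every
   middle vertex of the stacking of d1 over d2 is joined to a top vertex:
   no component lies in the middle row, so the product does not depend on n,
   and the middle labels are forced by the outer ones, so the action is
   multiplicative.  A labelling constant on the blocks of a balanced diagram
   takes each value equally often on the top and bottom rows, so the torus
   weights of both sides agree, which gives equivariance.
   Conversely an equivariant E is S_n-invariant, hence E i j only depends on
   ker(i, j), and comparing weights under diag(2, 1, ..., 1) shows that it
   vanishes unless ker(i, j) is balanced.  As par_act x i j is the sum of the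
   x d over the d finer than ker(i, j), a preimage of E is found stratum by
   stratum in the number of related pairs of vertices.  For n >= k every
   balanced partition is a kernel; evaluating at the kernel of a minimal d in
   the support of x gives injectivity. *)

From Pilot Require Import Defs.
From HB Require Import structures.
From mathcomp Require Import all_boot all_order all_algebra all_fingroup.
From mathcomp Require Import zify.
Set Implicit Arguments. Unset Strict Implicit. Unset Printing Implicit Defensive.
Import GRing.Theory Num.Theory.
Local Open Scope ring_scope.

Lemma eq_kernel_perm (T S : finType) (f g : T -> S) :
  (forall u v, (f u == f v) = (g u == g v)) -> exists s : {perm S}, forall u, s (f u) = g u.
Proof.
move=> fg; pose D (s : {perm S}) := [set u | s (f u) != g u].
suff /(_ #|T| 1%g (max_card _)) : forall N s, (#|D s| <= N)%N ->
  exists s' : {perm S}, forall u, s' (f u) = g u by [].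
elim=> [|N IH] s.
  rewrite leqn0 cards_eq0 => /eqP D0; exists s => u.
  by move/setP/(_ u): D0; rewrite !inE => /negbFE/eqP.
have [/IH // | D_big D_le] := leqP #|D s| N.
have /card_gt0P [u] : (0 < #|D s|)%N by apply: leq_ltn_trans D_big.
rewrite inE => ab; set a := s (f u) in ab; set b := g u in ab.
(* Composing with tperm a b repairs u without breaking any other point. *)
apply: (IH (s * tperm a b)%g); rewrite -ltnS; apply: leq_trans D_le.
apply/proper_card/properP; split; last by exists u; rewrite !inE ?permM ?tpermL ?eqxx.
apply/subsetP => v; rewrite !inE permM; apply: contraNN => /eqP sv; rewrite sv tpermD //.
  apply: contraNneq ab => agv.
  have fvu : f v == f u by rewrite -(inj_eq (@perm_inj _ s)) sv -agv.
  by rewrite agv -fg.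
apply: contraNneq ab => bgv.
have fuv : f u == f v by rewrite fg -/b bgv.
by rewrite /a (eqP fuv) sv bgv.
Qed.

Section SetPartition.
Variable k : nat.
Implicit Types (d e : setpart k) (r : rel (vert k)).

Definition classes r : {set {set vert k}} := [set [set v | r u v] | u : vert k].

Lemma classesE r : classes r = equivalence_partition r setT.
Proof.
apply/setP=> B; apply/imsetP/imsetP=> [[u _ ->]|[u _ ->]]; exists u => //;
  by apply/setP=> v; rewrite !inE.
Qed.

Lemma classes_partition r : equivalence_rel r -> partition (classes r) setT.
Proof. by move=> r_eq; rewrite classesE; apply: equivalence_partitionP; apply: in3W. Qed.

Definition mkpart r (r_eq : equivalence_rel r) : setpart k :=
  exist _ (classes r) (classes_partition r_eq).

Lemma setpart_trivI d : trivIset (val d).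
Proof. exact: partition_trivIset (valP d). Qed.

Lemma mem_cover_setpart d u : u \in cover (val d).
Proof. by rewrite (cover_partition (valP d)) inE. Qed.

Lemma blkE d u v : blk d u v = (v \in pblock (val d) u).
Proof. by rewrite /blk eq_pblock ?setpart_trivI ?mem_cover_setpart. Qed.

Lemma blk_mkpart r (r_eq : equivalence_rel r) u v : blk (mkpart r_eq) u v = r u v.
Proof.
by rewrite blkE /= classesE pblock_equivalence_partition //; apply: in3W.
Qed.

Lemma blk_sym d u v : blk d u v = blk d v u. Proof. exact: eq_sym. Qed.

Lemma blk_trans d u v w : blk d u v -> blk d v w -> blk d u w.
Proof. by rewrite /blk => /eqP-> /eqP->. Qed.

Lemma blk_block d B u v : B \in val d -> u \in B -> (v \in B) = blk d u v.
Proof. by move=> dB Bu; rewrite blkE (def_pblock (setpart_trivI d) dB Bu). Qed.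

Lemma classes_blk d : val d = classes (blk d).
Proof.
rewrite classesE -{1}(equivalence_partition_pblock (valP d)).
by apply: eq_imset => u; apply/setP=> v; rewrite !inE blkE.
Qed.

Lemma blk_inj d e : blk d =2 blk e -> d = e.
Proof.
move=> de; apply: val_inj; rewrite !classes_blk.
by apply: eq_imset => u; apply/setP => v; rewrite !inE de.
Qed.

End SetPartition.

Section Refinement.
Variable k : nat.
Implicit Types d e : setpart k.

Definition finer d e := [forall u, forall v, blk d u v ==> blk e u v].

Lemma finerP d e : reflect (forall u v, blk d u v -> blk e u v) (finer d e).
Proof.
apply: (iffP forallP) => [de u v|de u]; first exact: (implyP (forallP (de u) v)).
by apply/forallP => v; apply/implyP/de.
Qed.

Lemma finer_refl d : finer d d. Proof. exact/finerP. Qed.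

Definition npairs d := #|[set p : vert k * vert k | blk d p.1 p.2]|.

Lemma npairs_finer d e : finer d e -> (npairs d <= npairs e)%N.
Proof.
by move/finerP => de; apply/subset_leq_card/subsetP => p; rewrite !inE; apply: de.
Qed.

Lemma npairs_proper_finer d e : finer d e -> d != e -> (npairs d < npairs e)%N.
Proof.
move=> /finerP de; apply: contraNT; rewrite -leqNgt => ed.
have /eqP blk_de : [set p : vert k * vert k | blk d p.1 p.2] ==
                   [set p : vert k * vert k | blk e p.1 p.2].
  by rewrite eqEcard ed andbT; apply/subsetP => p; rewrite !inE; apply: de.
by apply/eqP/blk_inj => u v; move/setP/(_ (u, v)): blk_de; rewrite !inE.
Qed.

End Refinement.

Section KernelPartition.
Variables k n : nat.
Implicit Types (d : setpart k) (i j : tidx k n).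

Lemma same_label_equiv i j : equivalence_rel (fun u v => label i j u == label i j v).
Proof. by move=> u v w; split=> // /eqP->. Qed.

Definition ker_part i j : setpart k := mkpart (same_label_equiv i j).

Lemma blk_ker_part i j u v : blk (ker_part i j) u v = (label i j u == label i j v).
Proof. exact: blk_mkpart. Qed.

Lemma finer_kerP d i j :
  reflect (forall u v, blk d u v -> label i j u = label i j v) (finer d (ker_part i j)).
Proof.
by apply: (iffP (finerP _ _)) => de u v /de; rewrite blk_ker_part => /eqP.
Qed.

Lemma diag_actE (K : nzRingType) d i j : diag_act K d i j = (finer d (ker_part i j))%:R.
Proof.
rewrite /diag_act /finer; congr (nat_of_bool _)%:R.
by apply: eq_forallb => u; apply: eq_forallb => v; rewrite blk_ker_part.
Qed.

End KernelPartition.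

Section Balanced.
Variable k : nat.
Implicit Types d e : setpart k.

Lemma balanced_big (R : Type) (idx : R) (op : Monoid.com_law idx) d (f : vert k -> R) :
  balanced_part d -> (forall u v, blk d u v -> f u = f v) ->
  \big[op/idx]_(r : 'I_k) f (inl r) = \big[op/idx]_(r : 'I_k) f (inr r).
Proof.
move=> /forallP bal_d f_blk.
have pblock_in u : pblock (val d) u \in val d by rewrite pblock_mem ?mem_cover_setpart.
rewrite (partition_big (fun r => pblock (val d) (inl r)) (mem (val d)));
  last by move=> r _; apply: pblock_in.
rewrite [RHS](partition_big (fun r => pblock (val d) (inr r)) (mem (val d)));
  last by move=> r _; apply: pblock_in.
apply: eq_bigr => B dB.
have /set0Pn[w Bw] := partition_neq0 (valP d) dB.
have in_B u : (pblock (val d) u == B) = (u \in B).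
  apply/eqP/idP => [<-|Bu]; first by rewrite mem_pblock mem_cover_setpart.
  exact: def_pblock (setpart_trivI d) dB Bu.
have f_B u : u \in B -> f u = f w by rewrite (blk_block _ dB Bw) blk_sym => /f_blk.
rewrite (eq_bigr (fun _ => f w)) => [|r]; last by rewrite in_B => /f_B.
rewrite [RHS](eq_bigr (fun _ => f w)) => [|r]; last by rewrite in_B => /f_B.
rewrite !big_const; congr iter.
transitivity #|[set r | inl r \in B]|; first by apply: eq_card => r; rewrite inE -in_B.
by rewrite (eqP (implyP (bal_d B) dB)); apply: eq_card => r; rewrite inE -in_B.
Qed.

Lemma balanced_card_closed d (A : {set vert k}) : balanced_part d ->
  (forall u v, blk d u v -> u \in A -> v \in A) ->
  #|[set r | inl r \in A]| = #|[set r | inr r \in A]|.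
Proof.
move=> bal_d A_closed; rewrite -!sum1dep_card.
rewrite !(big_mkcond (fun r => _ \in _)) /=.
apply: (balanced_big _ (f := fun u => if u \in A then 1%N else 0%N)) bal_d _ => u v uv.
have vu : blk d v u by rewrite blk_sym.
case uA: (u \in A); case vA: (v \in A) => //.
  by have := A_closed _ _ uv uA; rewrite vA.
by have := A_closed _ _ vu vA; rewrite uA.
Qed.

Lemma balanced_finer d e : balanced_part d -> finer d e -> balanced_part e.
Proof.
move=> bal_d /finerP de; apply/forallP => B; apply/implyP => eB; apply/eqP.
apply: (balanced_card_closed bal_d) => u v uv Bu.
by rewrite (blk_block _ eB Bu); apply: de.
Qed.

Lemma balanced_blk_top d u : balanced_part d -> exists r, blk d u (inl r).
Proof.
move=> /forallP bal_d; case: u => [r|r]; first by exists r; apply: eqxx.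
set B := pblock (val d) (inr r).
have dB : B \in val d by rewrite pblock_mem ?mem_cover_setpart.
have : (0 < #|[set i | inr i \in B]|)%N.
  by apply/card_gt0P; exists r; rewrite inE mem_pblock mem_cover_setpart.
rewrite -(eqP (implyP (bal_d B) dB)) => /card_gt0P [i].
by rewrite inE => ri; exists i; rewrite blkE.
Qed.

Lemma ker_part_balanced n (i j : tidx k n) :
  (forall a, #|[pred r | i r == a]| = #|[pred r | j r == a]|) ->
  balanced_part (ker_part i j).
Proof.
move=> count_ij; apply/forallP => B; apply/implyP => /imsetP [u _ ->]; apply/eqP.
transitivity #|[pred r | i r == label i j u]|.
  by apply: eq_card => r; rewrite !inE eq_sym.
by rewrite count_ij; apply: eq_card => r; rewrite !inE eq_sym.
Qed.

End Balanced.

Section Stacking.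
Variables (k : nat) (d1 d2 : setpart k).
Local Notation conn := (stack_conn d1 d2).

Lemma stack_rel_sym : symmetric (stack_rel d1 d2).
Proof.
move=> x y; congr orb; apply/existsP/existsP => -[u /existsP[v /and3P[ux vy uv]]];
  by exists v; apply/existsP; exists u; rewrite ux vy blk_sym.
Qed.

Lemma stack_conn_sym x y : conn x y = conn y x.
Proof. exact: (sym_connect_sym stack_rel_sym). Qed.

Lemma stack_conn_top u v : blk d1 u v -> conn (e_top u) (e_top v).
Proof.
move=> uv; apply/connect1/orP; left.
by apply/existsP; exists u; apply/existsP; exists v; rewrite !eqxx uv.
Qed.

Lemma stack_conn_bot u v : blk d2 u v -> conn (e_bot u) (e_bot v).
Proof.
move=> uv; apply/connect1/orP; right.
by apply/existsP; exists u; apply/existsP; exists v; rewrite !eqxx uv.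
Qed.

Lemma outer_conn_equiv : equivalence_rel (fun u v => conn (e_out u) (e_out v)).
Proof.
move=> u v w; split=> [|uv]; first exact: connect0.
apply/idP/idP => uw; last exact: connect_trans uv uw.
by apply: connect_trans uw; move: uv; rewrite stack_conn_sym.
Qed.

Lemma compE : Defs.comp d1 d2 = mkpart outer_conn_equiv.
Proof.
by apply: val_inj; rewrite /Defs.comp insubdK //; apply: (classes_partition outer_conn_equiv).
Qed.

Lemma blk_comp u v : blk (Defs.comp d1 d2) u v = conn (e_out u) (e_out v).
Proof. by rewrite compE blk_mkpart. Qed.

Lemma stack_conn_mid_top : balanced_part d1 ->
  forall j, exists r, conn (inl (inr j)) (inl (inl r)).
Proof.
move=> bal1 j; have [r jr] := balanced_blk_top (inr j) bal1.
by exists r; exact: (stack_conn_top jr).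
Qed.

Lemma nmid_balanced : balanced_part d1 -> nmid d1 d2 = 0%N.
Proof.
move=> /stack_conn_mid_top mid_top; apply/eqP; rewrite cards_eq0; apply/eqP/setP => S.
rewrite inE; apply/imsetP => -[j]; rewrite inE => /forallP only_mid _.
by have [r /(implyP (only_mid _))] := mid_top j.
Qed.

Lemma comp_balanced :
  balanced_part d1 -> balanced_part d2 -> balanced_part (Defs.comp d1 d2).
Proof.
move=> bal1 bal2; apply/forallP => B; apply/implyP; rewrite compE => /imsetP [u _ ->].
apply/eqP; pose C x := conn (e_out u) x.
pose A1 := [set v | C (e_top v)]; pose A2 := [set v | C (e_bot v)].
have A1_closed v w : blk d1 v w -> v \in A1 -> w \in A1.
  by move=> vw; rewrite !inE => /connect_trans; apply; apply: stack_conn_top.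
have A2_closed v w : blk d2 v w -> v \in A2 -> w \in A2.
  by move=> vw; rewrite !inE => /connect_trans; apply; apply: stack_conn_bot.
transitivity #|[set r | inl r \in A1]|; first by apply: eq_card => r; rewrite !inE.
rewrite (balanced_card_closed bal1 A1_closed).
transitivity #|[set r | inl r \in A2]|; first by apply: eq_card => r; rewrite !inE.
rewrite (balanced_card_closed bal2 A2_closed).
by apply: eq_card => r; rewrite !inE.
Qed.

End Stacking.

Section ActionOfComposite.
Variables (k n : nat) (d1 d2 : setpart k).
Hypothesis bal1 : balanced_part d1.
Local Notation conn := (stack_conn d1 d2).
Implicit Types i j l : tidx k n.

Definition label3 i l j (x : row3 k) : 'I_n :=
  match x with inl (inl r) => i r | inl (inr r) => l r | inr r => j r end.

Lemma label3_top i l j u : label i l u = label3 i l j (e_top u). Proof. by case: u. Qed.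
Lemma label3_bot i l j u : label l j u = label3 i l j (e_bot u). Proof. by case: u. Qed.
Lemma label3_out i l j u : label i j u = label3 i l j (e_out u). Proof. by case: u. Qed.

Lemma stack_conn_label3 i l j :
  finer d1 (ker_part i l) -> finer d2 (ker_part l j) ->
  forall x y, conn x y -> label3 i l j x = label3 i l j y.
Proof.
move=> /finer_kerP il /finer_kerP lj x y /connectP [p + ->] {y}.
elim: p x => //= z p IH x /andP [xz /IH <-].
case/orP: xz => /existsP [u /existsP [v /and3P [/eqP <- /eqP <- uv]]].
  by rewrite -!label3_top; apply: il.
by rewrite -!label3_bot; apply: lj.
Qed.

Lemma finer_comp_ker i l j :
  finer d1 (ker_part i l) -> finer d2 (ker_part l j) ->
  finer (Defs.comp d1 d2) (ker_part i j).
Proof.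
move=> il lj; apply/finer_kerP => u v; rewrite blk_comp !(label3_out i l j).
exact: stack_conn_label3.
Qed.

Lemma middle_label_unique i j l l' :
  finer d1 (ker_part i l) -> finer d2 (ker_part l j) ->
  finer d1 (ker_part i l') -> finer d2 (ker_part l' j) -> l = l'.
Proof.
move=> il lj il' l'j; apply/ffunP => r.
have [r' rr'] := stack_conn_mid_top d2 bal1 r.
by have /= -> := stack_conn_label3 il lj rr'; have /= -> := stack_conn_label3 il' l'j rr'.
Qed.

Lemma comp_ker_middle i j : finer (Defs.comp d1 d2) (ker_part i j) ->
  exists2 l, finer d1 (ker_part i l) & finer d2 (ker_part l j).
Proof.
move=> /finer_kerP ij.
pose top r := odflt r [pick r' | conn (inl (inr r)) (inl (inl r'))].
have mid_top r : conn (inl (inr r)) (inl (inl (top r))).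
  rewrite /top; case: pickP => [r' //|none].
  by have [r' rr'] := stack_conn_mid_top d2 bal1 r; rewrite none in rr'.
pose rep x : vert k :=
  match x with inl (inl r) => inl r | inl (inr r) => inl (top r) | inr r => inr r end.
have conn_rep x : conn x (e_out (rep x)).
  by case: x => [[r|r]|r]; [apply: connect0 | apply: mid_top | apply: connect0].
pose l : tidx k n := [ffun r => i (top r)].
have label3_rep x : label3 i l j x = label i j (rep x).
  by case: x => [[r|r]|r] //=; rewrite ffunE.
have conn_label3 x y : conn x y -> label3 i l j x = label3 i l j y.
  move=> xy; rewrite !label3_rep; apply: ij; rewrite blk_comp.
  apply: connect_trans (conn_rep y); apply: connect_trans xy.
  by move: (conn_rep x); rewrite stack_conn_sym.
exists l; apply/finer_kerP => u v uv.
  by rewrite !(label3_top i l j); apply/conn_label3/stack_conn_top.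
by rewrite !(label3_bot i l j); apply/conn_label3/stack_conn_bot.
Qed.

Lemma diag_act_comp (K : nzRingType) i j :
  \sum_l diag_act K d1 i l * diag_act K d2 l j = diag_act K (Defs.comp d1 d2) i j.
Proof.
under eq_bigr do rewrite !diag_actE -natrM mulnb.
rewrite -natr_sum diag_actE; congr (_%:R).
have [ij | not_ij] := boolP (finer _ (ker_part i j)).
  have [l il lj] := comp_ker_middle ij.
  rewrite (bigD1 l) //= il lj big1 ?addn0 // => l' l'l.
  apply/eqP; rewrite eqb0; apply: contra l'l => /andP[il' l'j].
  by rewrite (middle_label_unique il' l'j il lj).
rewrite big1 // => l _; apply/eqP; rewrite eqb0; apply: contra not_ij => /andP[il lj].
exact: finer_comp_ker il lj.
Qed.

End ActionOfComposite.

Section Identity.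
Variable k : nat.

Definition column (u : vert k) : 'I_k := match u with inl r => r | inr r => r end.

Lemma same_column_equiv : equivalence_rel (fun u v => column u == column v).
Proof. by move=> u v w; split=> // /eqP->. Qed.

Definition id_part : setpart k := mkpart same_column_equiv.

Lemma val_id_part : val id_part = id_set k.
Proof.
apply/setP => B; apply/imsetP/imsetP => [[u _ ->]|[r _ ->]];
  [exists (column u) | exists (inl r)] => //;
  by apply/setP => -[v|v]; rewrite !inE -!sum_eqE /= ?orbF eq_sym.
Qed.

Lemma parone_id_part (K : nzRingType) d : parone K k d = (d == id_part)%:R.
Proof. by rewrite ffunE -val_id_part val_eqE. Qed.

Lemma id_part_balanced : balanced_part id_part.
Proof.
apply/forallP => B; apply/implyP => /imsetP [u _ ->].
by apply/eqP/eq_card => r; rewrite !inE.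
Qed.

Lemma parone_balanced (K : nzRingType) : balanced (parone K k).
Proof.
move=> d not_bal; rewrite parone_id_part; case: eqP => // d_id.
by rewrite d_id id_part_balanced in not_bal.
Qed.

End Identity.

Section Action.
Variables (K : nzRingType) (k n : nat).
Implicit Types (x y : parvec K k) (i j : tidx k n).

Lemma par_actD x y i j : par_act (x + y) i j = par_act x i j + par_act y i j.
Proof. by rewrite /par_act -big_split; apply: eq_bigr => d _; rewrite ffunE mulrDl. Qed.

Lemma par_act0 i j : par_act (0 : parvec K k) i j = 0.
Proof. by rewrite /par_act big1 // => d _; rewrite ffunE mul0r. Qed.

Lemma par_actE x i j : par_act x i j = \sum_d x d * (finer d (ker_part i j))%:R.
Proof. by apply: eq_bigr => d _; rewrite diag_actE. Qed.

Lemma par_act_one i j : par_act (parone K k) i j = (i == j)%:R.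
Proof.
rewrite /par_act (bigD1 (id_part k)) //= big1 => [|d not_id]; last first.
  by rewrite parone_id_part (negbTE not_id) mul0r.
rewrite parone_id_part eqxx mul1r addr0 diag_actE; congr (nat_of_bool _)%:R.
apply/finer_kerP/eqP => [same_col | <- u v]; last first.
  by rewrite blk_mkpart => /eqP; case: u => u; case: v => v /= ->.
by apply/ffunP => r; apply: (same_col (inl r) (inr r)); rewrite blk_mkpart.
Qed.

Lemma parmul_balanced (m : nat) x y : balanced x -> balanced y -> balanced (parmul m x y).
Proof.
move=> bal_x bal_y d not_bal; rewrite ffunE big1 // => d1 _; rewrite big1 // => d2 /eqP d12.
have [bal1 | /bal_x ->] := boolP (balanced_part d1); last by rewrite !mul0r.
have [bal2 | /bal_y ->] := boolP (balanced_part d2); last by rewrite mulr0 mul0r.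
by rewrite -d12 comp_balanced in not_bal.
Qed.

Lemma parmul_balanced_indep (m m' : nat) x y : balanced x -> parmul m x y = parmul m' x y.
Proof.
move=> bal_x; apply/ffunP => d; rewrite !ffunE.
apply: eq_bigr => d1 _; apply: eq_bigr => d2 _.
have [bal1 | /bal_x ->] := boolP (balanced_part d1); last by rewrite !mul0r.
by rewrite nmid_balanced.
Qed.

End Action.

Section ActionMultiplicative.
Variables (K : comNzRingType) (k n : nat).
Implicit Types (x y : parvec K k) (i j : tidx k n).

Lemma par_act_parmul x y i j :
  par_act (parmul n x y) i j = \sum_d1 \sum_d2
    x d1 * y d2 * n%:R ^+ nmid d1 d2 * diag_act K (Defs.comp d1 d2) i j.
Proof.
rewrite /par_act; under eq_bigr do rewrite ffunE mulr_suml.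
rewrite exchange_big; apply: eq_bigr => d1 _.
under eq_bigr do rewrite mulr_suml.
rewrite (exchange_big_dep xpredT) //=; apply: eq_bigr => d2 _.
by rewrite (big_pred1 (Defs.comp d1 d2)) // => d; rewrite eq_sym.
Qed.

Lemma par_act_mul x y i j : balanced x ->
  par_act (parmul n x y) i j = \sum_l par_act x i l * par_act y l j.
Proof.
move=> bal_x; rewrite par_act_parmul.
under [RHS]eq_bigr do rewrite mulr_suml.
rewrite [RHS]exchange_big; apply: eq_bigr => d1 _.
under [RHS]eq_bigr do rewrite mulr_sumr.
rewrite [RHS]exchange_big; apply: eq_bigr => d2 _.
have [bal1 | /bal_x ->] := boolP (balanced_part d1); last first.
  by rewrite !mul0r big1 // => l _; rewrite !mul0r.
rewrite nmid_balanced // mulr1 -(diag_act_comp _ bal1) mulr_sumr.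
by apply: eq_bigr => l _; rewrite mulrACA.
Qed.

End ActionMultiplicative.

Section Relabelling.
Variables k n : nat.
Implicit Types (s : 'S_n) (i j : tidx k n).

Definition relab s i : tidx k n := [ffun r => s (i r)].

Lemma label_relab s i j u : label (relab s i) (relab s j) u = s (label i j u).
Proof. by case: u => r /=; rewrite ffunE. Qed.

Lemma relab1 i : relab 1 i = i.
Proof. by apply/ffunP => r; rewrite ffunE perm1. Qed.

Lemma relabK s : cancel (relab s) (relab s^-1).
Proof. by move=> i; apply/ffunP => r; rewrite !ffunE permK. Qed.

Lemma relabKV s : cancel (relab s^-1) (relab s).
Proof. by move=> i; apply/ffunP => r; rewrite !ffunE permKV. Qed.

Lemma ker_part_relab s i j : ker_part (relab s i) (relab s j) = ker_part i j.
Proof.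
by apply: blk_inj => u v; rewrite !blk_ker_part !label_relab (inj_eq perm_inj).
Qed.

Lemma ker_part_eq_relab i j i' j' : ker_part i j = ker_part i' j' ->
  exists s, relab s i = i' /\ relab s j = j'.
Proof.
move=> ker_eq.
have [s s_label] : exists s : 'S_n, forall u, s (label i j u) = label i' j' u.
  by apply: eq_kernel_perm => u v; rewrite -!blk_ker_part ker_eq.
exists s; split; apply/ffunP => r; rewrite ffunE.
  exact: (s_label (inl r)).
exact: (s_label (inr r)).
Qed.

End Relabelling.

Section MonomialMatrices.
Variables (K : comNzRingType) (k n : nat) (t : 'rV[K]_n) (s : 'S_n).
Local Notation g := (diag_mx t *m perm_mx s).
Implicit Types (i j l : tidx k n) (E : tidx k n -> tidx k n -> K).

Definition tensor_weight l := \prod_r t 0 (l r).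

Lemma monomial_mxE a b : g a b = t 0 a * (s a == b)%:R.
Proof. by rewrite mul_diag_mx mxE /perm_mx row_permEsub !mxE. Qed.

Lemma tensor_pow_monomial l j : tensor_pow g l j = tensor_weight l * (relab s l == j)%:R.
Proof.
rewrite /tensor_pow (eq_bigr _ (fun r _ => monomial_mxE _ _)) big_split /=.
congr (_ * _); have [<- | l_j] := eqVneq (relab s l) j.
  by rewrite big1 // => r _; rewrite ffunE eqxx.
have [r /negbTE lr] : exists r, s (l r) != j r.
  by apply/existsP; apply: contraR l_j => /existsPn lj; apply/eqP/ffunP => r;
    rewrite ffunE; apply/eqP/negPn/lj.
by rewrite (bigD1 r) //= lr mul0r.
Qed.

Lemma sum_mul_tensor_pow_monomial E i j :
  \sum_l E i l * tensor_pow g l j = E i (relab s^-1 j) * tensor_weight (relab s^-1 j).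
Proof.
rewrite (bigD1 (relab s^-1 j)) //= big1 => [|l l_j]; last first.
  rewrite tensor_pow_monomial; have [lj | _] := eqVneq (relab s l) j.
    by rewrite -lj relabK eqxx in l_j.
  by rewrite mulr0n !mulr0.
by rewrite tensor_pow_monomial relabKV eqxx mulr1 addr0.
Qed.

Lemma sum_tensor_pow_monomial_mul E i j :
  \sum_l tensor_pow g i l * E l j = tensor_weight i * E (relab s i) j.
Proof.
rewrite (bigD1 (relab s i)) //= big1 => [|l l_i]; last first.
  by rewrite tensor_pow_monomial eq_sym (negbTE l_i) mulr0 mul0r.
by rewrite tensor_pow_monomial eqxx mulr1 addr0.
Qed.

Lemma diag_act_equivariant d i j : balanced_part d ->
  \sum_l diag_act K d i l * tensor_pow g l j = \sum_l tensor_pow g i l * diag_act K d l j.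
Proof.
move=> bal_d; rewrite sum_mul_tensor_pow_monomial sum_tensor_pow_monomial_mul.
set j' := relab s^-1 j; rewrite -[in RHS](relabKV s j) -/j' !diag_actE ker_part_relab.
have [/finer_kerP dij | _] := boolP (finer d _); last first.
  by rewrite mul0r mulr0.
rewrite mul1r mulr1 /tensor_weight.
symmetry; apply: (@balanced_big k K 1 *%R d (fun u => t 0 (label i j' u))) => //.
by move=> u v /dij ->.
Qed.

End MonomialMatrices.

Lemma par_act_equivariant (K : comNzRingType) k n (x : parvec K k) :
  balanced x -> equivariant (@par_act K k n x).
Proof.
move=> bal_x _ [t [s [_ ->]]] i j; rewrite /par_act.
under eq_bigr do rewrite mulr_suml; under [RHS]eq_bigr do rewrite mulr_sumr.
rewrite exchange_big [RHS]exchange_big; apply: eq_bigr => d _.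
have [bal_d | /bal_x x0] := boolP (balanced_part d); last first.
  by rewrite !big1 // => l _; rewrite x0 ?mul0r ?mulr0.
under eq_bigr do rewrite -mulrA; under [RHS]eq_bigr do rewrite mulrCA.
by rewrite -!mulr_sumr diag_act_equivariant.
Qed.

Section EquivariantMatrices.
Variables (K : numDomainType) (k n : nat) (E : tidx k n -> tidx k n -> K).
Hypothesis E_equiv : equivariant E.
Implicit Types i j : tidx k n.

Lemma equivariant_relab s i j : E (relab s i) (relab s j) = E i j.
Proof.
pose t : 'rV[K]_n := const_mx 1.
have t_weight l : tensor_weight t l = 1.
  by rewrite /tensor_weight big1 // => r _; rewrite mxE.
have TSn : in_TSn (diag_mx t *m perm_mx s).
  by exists t, s; split => // l; rewrite mxE oner_neq0.
have := E_equiv TSn i (relab s j).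
rewrite sum_mul_tensor_pow_monomial sum_tensor_pow_monomial_mul relabK !t_weight.
by rewrite mulr1 mul1r.
Qed.

Lemma equivariant_label_count i j : E i j != 0 ->
  forall a, #|[pred r | i r == a]| = #|[pred r | j r == a]|.
Proof.
(* In characteristic 0 the weight 2 ^+ c of diag(2, 1, ..., 1) determines c. *)
move=> Eij a; pose t : 'rV[K]_n := \row_b (if b == a then 2 else 1).
have t_weight (l : tidx k n) : tensor_weight t l = 2 ^+ #|[pred r | l r == a]|.
  rewrite /tensor_weight -prodr_const [RHS]big_mkcond.
  by apply: eq_bigr => r _; rewrite mxE.
have TSn : in_TSn (diag_mx t *m perm_mx 1).
  exists t, 1%g; split => // b; rewrite mxE.
  by case: (b == a); rewrite ?oner_neq0 ?pnatr_eq0.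
have := E_equiv TSn i j.
rewrite sum_mul_tensor_pow_monomial sum_tensor_pow_monomial_mul invg1 !relab1 !t_weight.
by rewrite mulrC => /(mulIf Eij)/eqP; rewrite -!natrX eqr_nat eqn_exp2l // => /eqP.
Qed.

Lemma equivariant_support_balanced i j : E i j != 0 -> balanced_part (ker_part i j).
Proof. by move/equivariant_label_count/ker_part_balanced. Qed.

End EquivariantMatrices.

Section Surjectivity.
Variables (K : nzRingType) (k n : nat).
Implicit Types (F : tidx k n -> tidx k n -> K) (x : parvec K k) (i j : tidx k n).

Definition ker_invariant F :=
  forall i j i' j', ker_part i j = ker_part i' j' -> F i j = F i' j'.

Definition balanced_support F := forall i j, F i j != 0 -> balanced_part (ker_part i j).

Lemma par_act_ker_invariant x : ker_invariant (par_act x).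
Proof. by move=> i j i' j' ker_eq; rewrite !par_actE ker_eq. Qed.

Lemma par_act_balanced_support x : balanced x -> balanced_support (par_act x).
Proof.
move=> bal_x i j; rewrite par_actE; apply: contraR => not_bal.
rewrite big1 // => d _; have [/balanced_finer bal_d | _] := boolP (finer d _).
  by rewrite bal_x ?mul0r //; apply: contra not_bal.
by rewrite mulr0.
Qed.

Definition ker_value F (d : setpart k) : K :=
  if [pick p | ker_part p.1 p.2 == d] is Some p then F p.1 p.2 else 0.

Lemma ker_valueE F i j : ker_invariant F -> ker_value F (ker_part i j) = F i j.
Proof.
rewrite /ker_value => F_inv; case: pickP => [p /eqP /F_inv // | none].
by have := none (i, j); rewrite eqxx.
Qed.

Definition stratum F m : parvec K k :=
  [ffun d => if (npairs d == m) && balanced_part d then ker_value F d else 0].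

Lemma stratum_balanced F m : balanced (stratum F m).
Proof. by move=> d not_bal; rewrite ffunE (negbTE not_bal) andbF. Qed.

Lemma par_act_stratum F i j : ker_invariant F -> balanced_support F ->
  par_act (stratum F (npairs (ker_part i j))) i j = F i j.
Proof.
move=> F_inv F_bal; rewrite par_actE (bigD1 (ker_part i j)) //= finer_refl mulr1.
rewrite big1 => [|d d_ij]; last first.
  have [d_fin | _] := boolP (finer d _); last by rewrite mulr0.
  by rewrite ffunE ltn_eqF ?mul0r // npairs_proper_finer.
rewrite ffunE eqxx addr0 /=; have [_ | not_bal] := boolP (balanced_part _).
  exact: ker_valueE.
by apply/esym/eqP; apply: contraR not_bal; apply: F_bal.
Qed.

Lemma par_act_stratum_lt F m i j :
  (npairs (ker_part i j) < m)%N -> par_act (stratum F m) i j = 0.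
Proof.
move=> ij_m; rewrite par_actE big1 // => d _.
have [/npairs_finer d_fin | _] := boolP (finer d _); last by rewrite mulr0.
by rewrite ffunE ltn_eqF ?mul0r //; apply: leq_ltn_trans ij_m.
Qed.

Lemma par_act_onto_bounded N F : ker_invariant F -> balanced_support F ->
  (forall i j, F i j != 0 -> (#|{: vert k * vert k}| < N + npairs (ker_part i j))%N) ->
  exists2 x, balanced x & forall i j, par_act x i j = F i j.
Proof.
elim: N F => [|N IH] F F_inv F_bal F_supp.
  exists 0 => [d _ | i j]; first by rewrite ffunE.
  rewrite par_act0; apply/esym/eqP; apply: contraT => /F_supp.
  by rewrite add0n ltnNge max_card.
pose m := (#|{: vert k * vert k}| - N)%N.
pose F' i j := F i j - par_act (stratum F m) i j.
have [x bal_x x_F'] : exists2 x, balanced x & forall i j, par_act x i j = F' i j.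
  apply: IH => [i j i' j' ker_eq | i j | i j].
  - by rewrite /F' (F_inv _ _ _ _ ker_eq) (par_act_ker_invariant _ ker_eq).
  - rewrite /F'; have [Fij0 | /F_bal //] := eqVneq (F i j) 0.
    by rewrite Fij0 sub0r oppr_eq0; apply/par_act_balanced_support/stratum_balanced.
  - rewrite /F'; apply: contraNT; rewrite -leqNgt => small.
    case: (ltngtP (npairs (ker_part i j)) m) => [lt | gt | <-].
    + rewrite par_act_stratum_lt // subr0; apply: contraT => /F_supp.
      by rewrite /m in lt; lia.
    + by rewrite /m in gt; lia.
    + by rewrite par_act_stratum // subrr.
exists (x + stratum F m) => [d not_bal | i j].
  by rewrite ffunE bal_x // stratum_balanced // addr0.
by rewrite par_actD x_F' /F' subrK.
Qed.

Lemma par_act_onto F : ker_invariant F -> balanced_support F ->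
  exists2 x, balanced x & forall i j, par_act x i j = F i j.
Proof.
by move=> F_inv F_bal; apply: (@par_act_onto_bounded #|{: vert k * vert k}|.+1) => // i j _;
  rewrite addSn ltnS leq_addr.
Qed.

End Surjectivity.

Section Injectivity.
Variables (k n : nat).
Hypothesis k_le_n : (k <= n)%N.

Lemma balanced_ker_part d : balanced_part d -> exists i j : tidx k n, ker_part i j = d.
Proof.
move=> bal_d; pose top u := odflt (column u) [pick r | blk d u (inl r)].
have pick_top u : [pick r | blk d u (inl r)] = Some (top u).
  rewrite /top; case: pickP => [r // | none].
  by have [r ur] := balanced_blk_top u bal_d; rewrite none in ur.
have top_blk u : blk d u (inl (top u)).
  by move: (pick_top u); case: pickP => // r ur [<-].
have top_eq u v : blk d u v -> top u = top v.
  move=> uv; apply: Some_inj; rewrite -!pick_top.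
  by apply: eq_pick => r /=; apply/idP/idP; apply: blk_trans; rewrite // blk_sym.
pose lab u := widen_ord k_le_n (top u).
have blk_lab u v : blk d u v = (lab u == lab v).
  apply/idP/eqP => [/top_eq top_uv | lab_uv]; first by rewrite /lab top_uv.
  have top_uv : top u = top v by apply: val_inj; exact: (congr1 val lab_uv).
  by apply: blk_trans (top_blk u) _; rewrite top_uv blk_sym.
exists [ffun r => lab (inl r)], [ffun r => lab (inr r)].
apply: blk_inj => u v; rewrite blk_ker_part blk_lab.
by case: u => u; case: v => v; rewrite /= !ffunE.
Qed.

Lemma balanced_par_act_eq0 (K : nzRingType) (x : parvec K k) : balanced x ->
  (forall i j : tidx k n, par_act x i j = 0) -> x = 0.
Proof.
move=> bal_x x_act0; apply/ffunP => d0; rewrite ffunE; apply/eqP; apply: contraT => xd0.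
have [d xd d_min] := @arg_minnP _ d0 (fun d => x d != 0) (@npairs k) xd0.
have bal_d : balanced_part d by apply: contraR xd => /bal_x ->.
have [i [j ij_d]] := balanced_ker_part bal_d.
have := x_act0 i j; rewrite par_actE ij_d (bigD1 d) //= finer_refl mulr1 big1 ?addr0.
  by move/eqP; rewrite (negbTE xd).
move=> d' d'_d; have [d'_fin | _] := boolP (finer d' d); last by rewrite mulr0.
have [-> | xd'] := eqVneq (x d') 0; first by rewrite mul0r.
by have := d_min _ xd'; rewrite leqNgt npairs_proper_finer.
Qed.

End Injectivity.

Theorem proposition4p1 (K : numClosedFieldType) (k : nat) :
  (* (1) Par^bal(k) is a subalgebra of Par(n,k) *)
  (balanced (parone K k) /\
   forall (n : nat) (x y : parvec K k),
     balanced x -> balanced y -> balanced (parmul n x y))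
  /\
  (* (2) the products on Par^bal(k) agree for all n, m *)
  (forall (n m : nat) (x y : parvec K k),
     balanced x -> balanced y -> parmul n x y = parmul m x y)
  /\
  (* (3) *)
  (forall n : nat,
     (* equivariance of the restricted action *)
     (forall x : parvec K k, balanced x -> equivariant (@par_act K k n x))
     /\ (* it is an algebra homomorphism on Par^bal(k) *)
     (forall x y : parvec K k, balanced x -> balanced y ->
        forall i j : tidx k n,
          par_act (parmul n x y) i j = \sum_(l : tidx k n) par_act x i l * par_act y l j)
     /\ (forall i j : tidx k n, par_act (parone K k) i j = (i == j)%:R)
     /\ (* surjective onto End_{T x| S_n}(V^{(x) k}) *)
     (forall E : tidx k n -> tidx k n -> K, equivariant E ->
        exists2 x : parvec K k, balanced x & forall i j, par_act x i j = E i j)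
     /\ (* injective (hence an isomorphism) when n >= k *)
     ((k <= n)%N -> forall x : parvec K k, balanced x ->
        (forall i j : tidx k n, par_act x i j = 0) -> x = 0)).
Proof.
split; [split|split].
- exact: parone_balanced.
- by move=> n x y; apply: parmul_balanced.
- by move=> n m x y bal_x _; apply: parmul_balanced_indep.
move=> n; split; [|split; [|split; [|split]]].
- exact: par_act_equivariant.
- by move=> x y bal_x _ i j; apply: par_act_mul.
- exact: par_act_one.
- move=> E E_equiv; apply: par_act_onto; last exact: equivariant_support_balanced.
  move=> i j i' j' /ker_part_eq_relab [s [<- <-]].
  by rewrite equivariant_relab.
- by move=> k_le_n x; apply: balanced_par_act_eq0.
Qed.
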